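(* Let $\mathcal{X}\subset\mathbb{R}^d$ be nonempty, closed, convex and compact with diameter $D:=\max_{x,y\in\mathcal{X}}\|x-y\|$. Let $\Phi:\mathcal{X}\to\mathbb{R}$ be differentiable with $L$-Lipschitz gradient, and set $G:=\max_{x\in\mathcal{X}}\|\nabla\Phi(x)\|$, $\Phi_{\max}:=\max_{\mathcal{X}}\Phi$, $\Phi_{\min}:=\min_{\mathcal{X}}\Phi$. Let $F:\mathcal{X}\to\mathbb{R}^d$ satisfy $F(x)=-\nabla\Phi(x)+R(x)$ with $\|R(x)\|\le\varepsilon$ for all $x\in\mathcal{X}$. Run $x_{t+1}=\operatorname{Proj}_{\mathcal{X}}(x_t+\eta\nabla\Phi(x_t))$, $t=0,\dots,T-1$, from $x_0\in\mathcal{X}$ with $0<\eta\le1/L$. Define $\mathcal{G}_\eta(x_t):=\frac1\eta(x_{t+1}-x_t)$, pick $\hat t\in\arg\min_{0\le t\le T-1}\|\mathcal{G}_\eta(x_t)\|$ and set $\hat x_T:=x_{\hat t}$. Then $$\operatorname{Gap}(\hat x_T)\le (D+\eta G)\sqrt{\frac{2(\Phi_{\max}-\Phi_{\min})}{T\eta}}+D\varepsilon.$$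
   Context: For $\bar x\in\mathcal{X}$, the (Stampacchia) duality gap of the operator $F$ is $\operatorname{Gap}(\bar x):=\max_{x\in\mathcal{X}}\langle F(\bar x),\bar x-x\rangle$ with the Euclidean inner product. $\operatorname{Proj}_{\mathcal{X}}$ is Euclidean projection onto $\mathcal{X}$. *)

From HB Require Import structures.
From mathcomp Require Import all_boot all_order all_algebra.
From mathcomp Require Import all_classical all_reals all_analysis.
Set Implicit Arguments. Unset Strict Implicit. Unset Printing Implicit Defensive.
Import Order.TTheory GRing.Theory Num.Theory.
Import numFieldNormedType.Exports.
Local Open Scope classical_set_scope.
Local Open Scope ring_scope.

Section Defs.
Variables (R : realType) (d : nat).
Local Notation V := 'rV[R]_d.

(* Euclidean inner product and Euclidean norm on R^d
   (the library norm on 'rV is the max-norm, so we use our own). *)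
Definition dotp (u v : V) : R := \sum_(i < d) u ord0 i * v ord0 i.
Definition enorm (u : V) : R := Num.sqrt (dotp u u).

Definition is_convex_set (X : set V) : Prop :=
  forall x y (l : R), X x -> X y -> 0 <= l <= 1 -> X (l *: x + (1 - l) *: y).

Definition is_proj (X : set V) (y p : V) : Prop :=
  X p /\ forall z, X z -> enorm (y - p) <= enorm (y - z).

Definition is_gradient_on (X : set V) (Phi : V -> R) (g : V -> V) : Prop :=
  forall x, X x -> differentiable Phi x /\ forall v, 'd Phi x v = dotp (g x) v.

Definition Gap (X : set V) (F : V -> V) (xb : V) : R :=
  sup [set dotp (F xb) (xb - x) | x in X].

Definition diam (X : set V) : R :=
  sup [set enorm (x - y) | x in X & y in X].
End Defs.

From HB Require Import structures.
From mathcomp Require Import all_boot all_order all_algebra.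
From mathcomp Require Import all_classical all_reals all_analysis.
From mathcomp Require Import ring lra.
Set Implicit Arguments. Unset Strict Implicit. Unset Printing Implicit Defensive.
Import Order.TTheory GRing.Theory Num.Theory.
Import numFieldNormedType.Exports.
Local Open Scope classical_set_scope.
Local Open Scope ring_scope.

(* The projection p of y onto a convex set is characterised by the obtuse-angle
   inequality <y - p, z - p> <= 0 for all z in the set.  Combined with the descent
   lemma for a gradient that is L-Lipschitz and with eta <= 1/L, it shows that each
   projected ascent step raises Phi by at least |x_{t+1} - x_t|^2 / (2 eta); summing
   over T steps, the shortest step has length at most
   eta sqrt (2 (Phimax - Phimin) / (T eta)).  The same inequality at the shortest
   step, tested against any z, bounds <- grad Phi (x), x - z> by (D + eta G) times
   that length over eta, and the perturbation R adds at most D eps by Cauchy-Schwarz. *)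

Section EuclideanGeometry.
Variables (R : realType) (d : nat).
Local Notation V := 'rV[R]_d.
Implicit Types (u v w : V).

Lemma dotpC u v : dotp u v = dotp v u.
Proof. by apply: eq_bigr => i _; rewrite mulrC. Qed.

Lemma dotpDl u v w : dotp (u + v) w = dotp u w + dotp v w.
Proof. by rewrite /dotp -big_split; apply: eq_bigr => i _; rewrite mxE mulrDl. Qed.

Lemma dotpZl a u v : dotp (a *: u) v = a * dotp u v.
Proof. by rewrite /dotp mulr_sumr; apply: eq_bigr => i _; rewrite mxE mulrA. Qed.

Lemma dotpNl u v : dotp (- u) v = - dotp u v.
Proof. by rewrite -scaleN1r dotpZl mulN1r. Qed.

Lemma dotpBl u v w : dotp (u - v) w = dotp u w - dotp v w.
Proof. by rewrite dotpDl dotpNl. Qed.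

Lemma dotp0l v : dotp 0 v = 0.
Proof. by rewrite -(scale0r 0) dotpZl mul0r. Qed.

Lemma dotpDr u v w : dotp w (u + v) = dotp w u + dotp w v.
Proof. by rewrite dotpC dotpDl !(dotpC w). Qed.

Lemma dotpZr a u v : dotp v (a *: u) = a * dotp v u.
Proof. by rewrite dotpC dotpZl dotpC. Qed.

Lemma dotpNr u v : dotp v (- u) = - dotp v u.
Proof. by rewrite dotpC dotpNl dotpC. Qed.

Lemma dotpBr u v w : dotp w (u - v) = dotp w u - dotp w v.
Proof. by rewrite dotpDr dotpNr. Qed.

Lemma dotp0r v : dotp v 0 = 0.
Proof. by rewrite dotpC dotp0l. Qed.

Lemma dotppB u v : dotp (u - v) (u - v) = dotp u u - 2 * dotp u v + dotp v v.
Proof. by rewrite !(dotpBl, dotpBr) (dotpC v u); ring. Qed.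

Lemma dotpp_ge0 u : 0 <= dotp u u.
Proof. by apply: sumr_ge0 => i _; rewrite -expr2 sqr_ge0. Qed.

Lemma dotpp_eq0 u : (dotp u u == 0) = (u == 0).
Proof.
apply/eqP/eqP => [u0|->]; last exact: dotp0l.
apply/rowP => j; rewrite mxE; apply/eqP; rewrite -[_ == 0]orbb -mulf_eq0; apply/eqP.
by apply: (psumr_eq0P _ u0) => // k _; rewrite -expr2 sqr_ge0.
Qed.

Lemma enorm_ge0 u : 0 <= enorm u.
Proof. exact: sqrtr_ge0. Qed.

Lemma enorm_gt0 u : u != 0 -> 0 < enorm u.
Proof. by rewrite sqrtr_gt0 lt_def dotpp_ge0 dotpp_eq0 andbT. Qed.

Lemma enorm_sqr u : enorm u ^+ 2 = dotp u u.
Proof. by rewrite sqr_sqrtr // dotpp_ge0. Qed.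

Lemma enormN u : enorm (- u) = enorm u.
Proof. by rewrite /enorm dotpNl dotpNr opprK. Qed.

Lemma enormZ a u : enorm (a *: u) = `|a| * enorm u.
Proof. by rewrite /enorm dotpZl dotpZr mulrA -expr2 sqrtrM ?sqr_ge0 // sqrtr_sqr. Qed.

Lemma enorm_le u M : 0 <= M -> dotp u u <= M ^+ 2 -> enorm u <= M.
Proof. by move=> M0 uM; rewrite -(ger0_norm M0) -sqrtr_sqr ler_wsqrtr. Qed.

Lemma ler_enorm_dotpp u v : enorm u <= enorm v -> dotp u u <= dotp v v.
Proof. by rewrite ler_sqrt // dotpp_ge0. Qed.

Lemma cauchy_schwarz u v : dotp u v <= enorm u * enorm v.
Proof.
have [->|u0] := eqVneq u 0; first by rewrite dotp0l mulr_ge0 ?enorm_ge0.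
have [->|v0] := eqVneq v 0; first by rewrite dotp0r mulr_ge0 ?enorm_ge0.
have nuv : 0 < enorm u * enorm v by rewrite mulr_gt0 ?enorm_gt0.
(* expand [0 <= |v|u - |u|v|^2 = 2 |u||v| (|u||v| - <u, v>)] *)
have := dotpp_ge0 (enorm v *: u - enorm u *: v).
rewrite dotppB !(dotpZl, dotpZr) -!enorm_sqr => expand_ge0.
by rewrite -(ler_pM2l nuv); nra.
Qed.

Lemma enormD u v : enorm (u + v) <= enorm u + enorm v.
Proof.
apply: enorm_le; first by rewrite addr_ge0 ?enorm_ge0.
rewrite dotpDl !dotpDr (dotpC v u) -!enorm_sqr.
by have := cauchy_schwarz u v; nra.
Qed.

Lemma enormB u v : enorm (u - v) <= enorm u + enorm v.
Proof. by rewrite -(enormN v) enormD. Qed.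

Lemma enorm_le_norm u : enorm u <= d%:R * `|u|.
Proof.
apply: enorm_le; first by rewrite mulr_ge0.
have coord_le i : u ord0 i * u ord0 i <= `|u| ^+ 2.
  have ui_le : `|u ord0 i| <= `|u|.
    rewrite [leRHS]/Num.norm /= mx_normrE.
    exact: (le_bigmax _ (fun ij : 'I_1 * 'I_d => `|u ij.1 ij.2|) (ord0, i)).
  by apply: le_trans (ler_norm _) _; rewrite normrM expr2 ler_pM.
apply: le_trans (ler_sum _ (fun i _ => coord_le i)) _.
rewrite sumr_const card_ord -[_ *+ d]mulr_natl exprMn.
apply: ler_wpM2r; first exact: sqr_ge0.
by rewrite -natrX ler_nat; case: (d) => // n; rewrite expnS leq_pmulr // expn_gt0.
Qed.

End EuclideanGeometry.

Section ConvexCompact.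
Variables (R : realType) (d : nat).
Local Notation V := 'rV[R]_d.
Implicit Types (X : set V) (Phi : V -> R) (g : V -> V).

Lemma is_proj_dotp_le0 X y p z : is_convex_set X -> is_proj X y p -> X z ->
  dotp (y - p) (z - p) <= 0.
Proof.
move=> cX [Xp p_min] Xz.
set a := dotp (y - p) (z - p); set c := dotp (z - p) (z - p).
have c_ge0 : 0 <= c by exact: dotpp_ge0.
(* p is closer to y than the point p + l (z - p) of the segment [p, z] *)
have small_l l : 0 < l -> l <= 1 -> 2 * a <= l * c.
  move=> l_gt0 l_le1; have l01 : 0 <= l <= 1 by rewrite ltW.
  have := ler_enorm_dotpp (p_min _ (cX z p l Xz Xp l01)).
  have -> : y - (l *: z + (1 - l) *: p) = (y - p) - l *: (z - p).
    by apply/rowP => i; rewrite !mxE; ring.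
  rewrite !dotppB !(dotpZl, dotpZr) -/a -/c.
  nra.
rewrite leNgt; apply/negP => a_gt0.
have ac_gt0 : 0 < a + c by lra.
have l_le1 : a / (a + c) <= 1 by rewrite ler_pdivrMr // mul1r; lra.
have := small_l _ (divr_gt0 a_gt0 ac_gt0) l_le1.
by rewrite mulrAC ler_pdivlMr //; nra.
Qed.

Lemma compact_enorm_bounded X : compact X -> exists M, forall x, X x -> enorm x <= M.
Proof.
move=> /compact_bounded [M [M_real M_ub]].
exists (d%:R * (`|M| + 1)) => x Xx.
apply: le_trans (enorm_le_norm x) _; rewrite ler_wpM2l //.
by apply: M_ub => //; rewrite (le_lt_trans (real_ler_norm M_real)) // ltrDl.
Qed.

Lemma enorm_le_diam X a b : compact X -> X a -> X b -> enorm (a - b) <= diam X.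
Proof.
move=> /compact_enorm_bounded [M M_ub] Xa Xb; apply: ub_le_sup; last by exists a => //; exists b.
exists (M + M) => _ [a' Xa' [b' Xb' <-]].
by apply: le_trans (enormB _ _) _; rewrite lerD ?M_ub.
Qed.

Lemma lipschitz_enorm_bounded X g L y0 : compact X -> X y0 ->
  (forall y z, X y -> X z -> enorm (g y - g z) <= L * enorm (y - z)) -> 0 <= L ->
  has_ubound [set enorm (g y) | y in X].
Proof.
move=> /compact_enorm_bounded [M M_ub] Xy0 g_lip L_ge0.
exists (L * (M + M) + enorm (g y0)) => _ [y Xy <-].
rewrite -(subrK (g y0) (g y)); apply: le_trans (enormD _ _) _; rewrite lerD2r.
apply: le_trans (g_lip _ _ Xy Xy0) _; rewrite ler_wpM2l //.
by apply: le_trans (enormB _ _) _; rewrite lerD ?M_ub.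
Qed.

Lemma compact_continuous_bounded X (f : V -> R) : compact X -> {within X, continuous f} ->
  has_ubound [set f x | x in X] /\ has_lbound [set f x | x in X].
Proof.
move=> cX cf; have [M [M_real M_ub]] := compact_bounded (continuous_compact cf cX).
have fM x : X x -> `|f x| <= `|M| + 1.
  move=> Xx; apply: (M_ub (`|M| + 1)); last by exists x.
  by rewrite (le_lt_trans (real_ler_norm M_real)) // ltrDl.
split; [exists (`|M| + 1) | exists (- (`|M| + 1))] => _ [x Xx <-].
  exact: le_trans (ler_norm _) (fM x Xx).
by rewrite lerNl (le_trans _ (fM x Xx)) // -normrN ler_norm.
Qed.

Lemma is_gradient_on_continuous X Phi g : is_gradient_on X Phi g -> {within X, continuous Phi}.
Proof.
move=> gX; apply: continuous_in_subspaceT => x /[1!inE] Xx.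
by apply: differentiable_continuous; case: (gX x Xx).
Qed.

End ConvexCompact.

Section GradientAscent.
Variables (R : realType) (d : nat).
Local Notation V := 'rV[R]_d.
Lemma is_derive_along_line (f : V -> R) x v s : differentiable f (s *: v + x) ->
  is_derive s 1 (fun t : R => f (t *: v + x)) ('d f (s *: v + x) v).
Proof.
move=> df; set z := s *: v + x.
have quotE : (fun h : R => h^-1 *: (((fun t : R => f (t *: v + x)) \o shift s) (h *: 1) - f z))
   = (fun h => h^-1 *: ((f \o shift z) (h *: v) - f z)).
  apply/funext => h /=; rewrite /shift /z; congr (_ *: (_ - _)); congr f.
  by rewrite /GRing.scale /= mulr1 -/(GRing.scale _ _) scalerDl addrA.
apply: DeriveDef; first by rewrite /derivable quotE; exact: diff_derivable.
by rewrite /derive quotE -/(derive f z v) deriveE.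
Qed.

Lemma is_derive_quadratic (a b s : R) :
  is_derive s 1 (fun t : R => a * (t * t) - b * t) (a * (s + s) - b).
Proof.
have id_s : is_derive s 1 (fun t : R => t) 1 by exact: is_derive_id.
have sqr_s : is_derive s 1 (fun t : R => t * t) (s + s).
  by rewrite -[in s + s](mulr1 s); exact: (is_deriveM id_s id_s).
have lin_s : is_derive s 1 (fun t : R => b * t) b.
  by rewrite -[X in is_derive _ _ _ X](mulr1 b); exact: is_deriveZ.
exact: is_deriveB (is_deriveZ a sqr_s) lin_s.
Qed.

Variables (X : set V) (Phi : V -> R) (g : V -> V) (L : R).
Hypotheses (convX : is_convex_set X) (gradX : is_gradient_on X Phi g) (L_ge0 : 0 <= L).
Hypothesis g_lip : forall y z, X y -> X z -> enorm (g y - g z) <= L * enorm (y - z).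

Lemma lipschitz_gradient_lower_bound x y : X x -> X y ->
  Phi x + dotp (g x) (y - x) - L / 2 * dotp (y - x) (y - x) <= Phi y.
Proof.
move=> Xx Xy; set v := y - x; set c := dotp (g x) v; set q := dotp v v.
have Xseg s : 0 <= s <= 1 -> X (s *: v + x).
  move=> s01; have := convX Xy Xx s01.
  by congr X; apply/rowP => i; rewrite !mxE; ring.
(* h 1 - h 0 is the claimed gap and h' s = <g (s v + x) - g x, v> + L s |v|^2 >= 0 *)
pose h t := Phi (t *: v + x) + (L / 2 * q * (t * t) - c * t).
have h_derive (s : R) : 0 <= s <= 1 ->
    is_derive s 1 h (dotp (g (s *: v + x)) v + (L / 2 * q * (s + s) - c)).
  move=> s01; have [dPhi gradE] := gradX (Xseg s s01).
  by rewrite -gradE; exact: is_deriveD (is_derive_along_line dPhi) (is_derive_quadratic _ _ _).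
have h_cont : {within `[0, 1], continuous h}.
  apply: derivable_within_continuous => s; rewrite in_itv /= => s01.
  by have [] := h_derive s s01.
have [s0 + hE] : exists2 s0, s0 \in `]0, 1[ &
    h 1 - h 0 = (dotp (g (s0 *: v + x)) v + (L / 2 * q * (s0 + s0) - c)) * (1 - 0).
  apply: MVT ltr01 _ h_cont => s; rewrite in_itv /= => /andP[s_gt0 s_lt1].
  by apply: h_derive; rewrite !ltW.
rewrite in_itv /= => /andP[s0_gt0 s0_lt1].
have slope_ge : - (L * s0 * q) <= dotp (g (s0 *: v + x)) v - c.
  rewrite /c -dotpBl lerNl -dotpNl.
  apply: le_trans (cauchy_schwarz _ _) _; rewrite enormN /q -enorm_sqr expr2 mulrA.
  apply: ler_wpM2r; first exact: enorm_ge0.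
  have := g_lip (Xseg s0 _) Xx; rewrite addrK enormZ ger0_norm ?mulrA; last exact: ltW.
  by apply; rewrite !ltW.
have q_ge0 : 0 <= q by exact: dotpp_ge0.
move: hE; rewrite /h scale0r scale1r add0r /v subrK -/v subr0 mulr1.
have : 0 <= L * s0 * q by rewrite !mulr_ge0 // ltW.
nra.
Qed.

Lemma proj_ascent_step eta x p : 0 < eta -> eta * L <= 1 -> X x ->
  is_proj X (x + eta *: g x) p -> dotp (p - x) (p - x) / 2 <= eta * (Phi p - Phi x).
Proof.
move=> eta_gt0 etaL_le1 Xx projp; set u := p - x.
have u_le : dotp u u <= eta * dotp (g x) u.
  have := is_proj_dotp_le0 convX projp Xx.
  have -> : x + eta *: g x - p = eta *: g x - u by apply/rowP => i; rewrite !mxE; ring.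
  have -> : x - p = - u by rewrite opprB.
  by rewrite dotpNr dotpBl dotpZl; lra.
have := lipschitz_gradient_lower_bound Xx projp.1; rewrite -/u => lower.
have uu_ge0 : 0 <= dotp u u by exact: dotpp_ge0.
have : eta * L * dotp u u <= dotp u u by rewrite -[leRHS]mul1r ler_wpM2r.
have : eta * (Phi x + dotp (g x) u - L / 2 * dotp u u) <= eta * Phi p by rewrite ler_pM2l.
nra.
Qed.

Lemma proj_step_gap_bound r x p z eta D G eps S : 0 < eta ->
  is_proj X (x + eta *: g x) p -> X z ->
  enorm (z - p) <= D -> enorm (x - z) <= D -> enorm (g x) <= G -> enorm r <= eps ->
  enorm (p - x) <= eta * S ->
  dotp (- g x + r) (x - z) <= (D + eta * G) * S + D * eps.
Proof.
move=> eta_gt0 projp Xz zp_le xz_le gx_le r_le u_le; set u := p - x.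
have vi : eta * dotp (g x) (z - p) <= dotp u (z - p).
  have := is_proj_dotp_le0 convX projp Xz.
  have -> : x + eta *: g x - p = eta *: g x - u by apply/rowP => i; rewrite !mxE; ring.
  by rewrite dotpBl dotpZl subr_le0.
have grad_part : dotp (- g x) (x - z) <= (D + eta * G) * S.
  rewrite -(ler_pM2l eta_gt0) dotpNl -dotpNr opprB.
  have -> : z - x = (z - p) + u by rewrite /u addrA subrK.
  have -> : eta * ((D + eta * G) * S) = D * (eta * S) + eta * (G * (eta * S)) by ring.
  rewrite dotpDr mulrDr; apply: lerD.
    apply: le_trans vi _; apply: le_trans (cauchy_schwarz _ _) _.
    by rewrite mulrC ler_pM ?enorm_ge0.
  rewrite ler_pM2l //; apply: le_trans (cauchy_schwarz _ _) _.
  by rewrite ler_pM ?enorm_ge0.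
have noise_part : dotp r (x - z) <= D * eps.
  by apply: le_trans (cauchy_schwarz _ _) _; rewrite mulrC ler_pM ?enorm_ge0.
by rewrite dotpDl lerD.
Qed.

End GradientAscent.

Lemma ler_telescope (R : numDomainType) (a : nat -> R) (c : R) (n : nat) :
  (forall t, (t < n)%N -> c <= a t.+1 - a t) -> n%:R * c <= a n - a 0%N.
Proof.
move=> step; rewrite -telescope_sumr // -[n in n%:R]subn0 mulr_natl -sumr_const_nat.
by apply: ler_sum_nat => t /andP[_]; exact: step.
Qed.

Lemma ler_sqrt_rate (R : rcfType) (m W n eta : R) : 0 < n -> 0 < eta ->
  n * (m / 2) <= eta * W -> Num.sqrt m <= eta * Num.sqrt (2 * W / (n * eta)).
Proof.
move=> n_gt0 eta_gt0 bound.
rewrite -[eta in eta * _]gtr0_norm // -sqrtr_sqr -sqrtrM ?sqr_ge0 //; apply: ler_wsqrtr.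
have -> : eta ^+ 2 * (2 * W / (n * eta)) = 2 * eta * W / n.
  by field; rewrite !lt0r_neq0.
by rewrite ler_pdivlMr //; lra.
Qed.

Lemma Gap_le (R : realType) (d : nat) (X : set 'rV[R]_d) (F : 'rV[R]_d -> 'rV[R]_d) xb B :
  X !=set0 -> (forall z, X z -> dotp (F xb) (xb - z) <= B) -> Gap X F xb <= B.
Proof.
move=> [z0 Xz0] ub; apply: ge_sup => [|_ [z Xz <-]]; last exact: ub.
by exists (dotp (F xb) (xb - z0)), z0.
Qed.

Theorem theorem6p7 (R : realType) (d : nat) (X : set 'rV[R]_d)
  (Phi : 'rV[R]_d -> R) (gradPhi : 'rV[R]_d -> 'rV[R]_d)
  (F Rr : 'rV[R]_d -> 'rV[R]_d) (L eps eta : R) (T : nat)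
  (x : nat -> 'rV[R]_d) (that : nat) :
  X !=set0 -> closed X -> is_convex_set X -> compact X ->
  is_gradient_on X Phi gradPhi ->
  0 < L ->
  (forall y z, X y -> X z -> enorm (gradPhi y - gradPhi z) <= L * enorm (y - z)) ->
  (forall y, X y -> F y = - gradPhi y + Rr y) ->
  (forall y, X y -> enorm (Rr y) <= eps) ->
  0 < eta -> eta <= L^-1 ->
  (0 < T)%N ->
  X (x 0%N) ->
  (forall t, (t < T)%N -> is_proj X (x t + eta *: gradPhi (x t)) (x t.+1)) ->
  (that < T)%N ->
  (forall t, (t < T)%N ->
     enorm (eta^-1 *: (x that.+1 - x that)) <= enorm (eta^-1 *: (x t.+1 - x t))) ->
  let D := diam X in
  let G := sup [set enorm (gradPhi y) | y in X] in
  let Phimax := sup [set Phi y | y in X] in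
  let Phimin := inf [set Phi y | y in X] in
  Gap X F (x that) <=
    (D + eta * G) * Num.sqrt (2 * (Phimax - Phimin) / (T%:R * eta)) + D * eps.
Proof.
move=> X_ne _ convX cptX gradX L_gt0 g_lip FE r_le eta_gt0 eta_le T_gt0 X0 x_proj
  that_lt that_min; cbv zeta.
set Phimax := sup [set Phi y | y in X]; set Phimin := inf [set Phi y | y in X].
have [y0 Xy0] := X_ne.
have Xx t : (t <= T)%N -> X (x t).
  by elim: t => [|t _] t_le; [exact: X0 | case: (x_proj t t_le)].
have [Phi_ub Phi_lb] := compact_continuous_bounded cptX (is_gradient_on_continuous gradX).
have etaL_le1 : eta * L <= 1 by rewrite -(mulVf (lt0r_neq0 L_gt0)) ler_pM2r.
set u := x that.+1 - x that.
have ascent t : (t < T)%N -> dotp u u / 2 <= eta * Phi (x t.+1) - eta * Phi (x t).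
  move=> t_lt; rewrite -mulrBr; apply: le_trans (proj_ascent_step convX gradX (ltW L_gt0)
    g_lip eta_gt0 etaL_le1 (Xx t (ltnW t_lt)) (x_proj t t_lt)).
  rewrite ler_pM2r // ler_enorm_dotpp //.
  by have := that_min t t_lt; rewrite !enormZ ler_pM2l // normr_gt0 invr_neq0 // gt_eqF.
have u_le : enorm u <= eta * Num.sqrt (2 * (Phimax - Phimin) / (T%:R * eta)).
  apply: ler_sqrt_rate; rewrite ?ltr0n //.
  apply: le_trans (ler_telescope ascent) _; rewrite -mulrBr ler_pM2l // lerB //.
    by apply: ub_le_sup Phi_ub _ _; exists (x T) => //; exact: Xx.
  by apply: ge_inf Phi_lb _ _; exists (x 0%N).
have Xthat := Xx that (ltnW that_lt).
apply: Gap_le => [|z Xz]; first by exists y0.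
rewrite FE //; apply: (proj_step_gap_bound convX eta_gt0 (x_proj _ that_lt) Xz) => //.
- exact: enorm_le_diam cptX Xz (x_proj _ that_lt).1.
- exact: enorm_le_diam cptX Xthat Xz.
- apply: ub_le_sup (lipschitz_enorm_bounded cptX Xy0 g_lip (ltW L_gt0)) _ _.
  by exists (x that).
- exact: r_le.
Qed.
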